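(* Let $(\hat p_n)_{n\ge0}$ be the monic orthogonal polynomials with respect to a positive Borel measure on $\mathbb{R}$ with infinitely many points in its support. Then there exist sequences of positive numbers $(\rho_n)_{n\ge0}$ such that the normalized polynomials $p_n(x)=\rho_n\hat p_n(x)$ satisfy: for any positive integer $K$ and any real numbers $\gamma_0,\dots,\gamma_K$ with $\gamma_0=1$ and $\gamma_K\neq0$, the polynomials $$q_n(x)=\sum_{j=0}^K\gamma_jp_{n-j}(x)$$ have only real zeros for all $n$ sufficiently large (how large depending only on $K$ and $\gamma_0,\dots,\gamma_K$). *)

From HB Require Import structures.
From mathcomp Require Import all_boot all_order all_algebra.
From mathcomp Require Import all_classical all_reals all_analysis.
From mathcomp Require Import complex.
Set Implicit Arguments. Unset Strict Implicit. Unset Printing Implicit Defensive.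
Import Order.TTheory GRing.Theory Num.Theory.
Local Open Scope ring_scope.
Local Open Scope classical_set_scope.

Definition msupport (R : realType) (mu : {measure set R -> \bar R}) : set R :=
  [set x : R | forall e : R, (0 < e)%R ->
     (0 < mu [set y : R | ((x - e < y) && (y < x + e))%R])%E].

Definition finite_moments (R : realType) (mu : {measure set R -> \bar R}) :=
  forall k : nat, mu.-integrable setT (fun x : R => (x ^+ k)%:E).

Definition monic_OPS (R : realType) (mu : {measure set R -> \bar R})
  (ph : nat -> {poly R}) :=
  (forall n, ph n \is monic) /\ (forall n, size (ph n) = n.+1) /\
  (forall n m, n <> m ->
     (\int[mu]_x ((ph n).[x] * (ph m).[x])%:E = 0)%E).

Definition only_real_zeros (R : realType) (p : {poly R}) : Prop :=
  forall z : R[i], root (map_poly (fun r : R => r%:C)%C p) z -> complex.Im z = 0.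

(* Each monic orthogonal polynomial ph n has n simple real zeros: otherwise
   ph n = T * W with T >= 0 on R and deg W < n, and the integral of
   ph n * W = T * W^2 would be both 0 (orthogonality) and positive (the
   support of mu is infinite).  Around these zeros choose disjoint intervals
   [r - d, r + d] at whose ends ph n changes sign.  The weights rho grow so
   fast that (n + 1) rho m |ph m| <= rho n |ph n| at all these interval ends
   for every m < n.  Once n + 1 exceeds the sum of the |gamma j|, j >= 1, the
   tail sum of the gamma j rho (n - j) ph (n - j) is dominated by rho n ph n at
   every interval end, so q n changes sign in each of the n disjoint intervals;
   being of degree n, it has only real zeros. *)

From HB Require Import structures.
From mathcomp Require Import all_boot all_order all_algebra.
From mathcomp Require Import all_classical all_reals all_analysis.
From mathcomp Require Import complex finmap measurable_realfun.
From mathcomp Require polyrcf.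
From mathcomp Require Import lra zify.
Set Implicit Arguments. Unset Strict Implicit. Unset Printing Implicit Defensive.
Import Order.TTheory GRing.Theory Num.Theory numFieldNormedType.Exports.
Local Open Scope ring_scope.
Local Open Scope classical_set_scope.

Section RealPolynomials.
Variable R : realType.
Implicit Types (P Q E : {poly R}) (rs : seq R).

Lemma only_real_zeros_of_roots Q rs :
  uniq rs -> size Q = (size rs).+1 -> all (root Q) rs -> only_real_zeros Q.
Proof.
move=> urs sizeQ rootsQ z.
have Q0 : lead_coef Q != 0 by rewrite lead_coef_eq0 -size_poly_eq0 sizeQ.
rewrite (all_roots_prod_XsubC sizeQ rootsQ) ?uniq_rootsE // -mul_polyC.
rewrite rmorphM /= map_polyC map_prod_XsubC rootM rootC.
rewrite /root horner_prod prodf_seq_eq0 => /orP[/eqP/(congr1 (@complex.Re R))|].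
  by move=> /= lcQ0; rewrite lcQ0 eqxx in Q0.
by case/hasP=> s _ /=; rewrite hornerXsubC subr_eq0 => /eqP ->.
Qed.

Definition interval_ends rs (d : R) :=
  [seq r - d | r <- rs] ++ [seq r + d | r <- rs].

Definition isolating_intervals P rs (d : R) : Prop :=
  [/\ uniq rs, size P = (size rs).+1, 0 < d,
      {in rs &, forall x y, x != y -> 2 * d < `|x - y|} &
      {in rs, forall r, P.[r - d] * P.[r + d] < 0}].

Lemma isolating_intervals_only_real_zeros P rs d :
  isolating_intervals P rs d -> only_real_zeros P.
Proof.
case=> urs sizeP d_gt0 sep sgn.
have /choice[f fP] : forall r, exists s, r \in rs -> (`|r - s| <= d) && root P s.
  move=> r; have [r_rs|] := boolP (r \in rs); last by exists 0.
  have le_rd : r - d <= r + d by lra.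
  have [s] := polyrcf.poly_ivt le_rd (ltW (sgn r r_rs)).
  rewrite in_itv /= => /andP[s_ge s_le] rootPs.
  by exists s => _; rewrite rootPs andbT ler_norml; apply/andP; split; lra.
apply: (only_real_zeros_of_roots (rs := map f rs)); rewrite ?size_map //.
  rewrite map_inj_in_uniq // => x y x_rs y_rs fxy; apply/eqP/negP => /negP xy.
  have /andP[fx _] := fP x x_rs; have /andP[fy _] := fP y y_rs.
  have := sep x y x_rs y_rs xy; rewrite fxy in fx.
  have : `|x - y| <= `|x - f y| + `|f y - y| by rewrite ler_distD.
  by rewrite distrC in fy; lra.
by apply/allP => _ /mapP[r r_rs ->]; case/andP: (fP r r_rs).
Qed.

Lemma exists_separation rs :
  exists2 d : R, 0 < d & {in rs &, forall x y, x != y -> 2 * d < `|x - y|}.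
Proof.
pose d := \big[Num.min/1]_(x <- rs) \big[Num.min/1]_(y <- rs | y != x) (`|x - y| / 4).
exists d.
  apply: lt_bigmin => // x _; apply: lt_bigmin => // y yx.
  by rewrite divr_gt0 // normr_gt0 subr_eq0 eq_sym.
move=> x y x_rs y_rs xy.
have d_le : d <= `|x - y| / 4.
  apply: le_trans (ge_bigmin_seq _ _ _ _ x_rs isT) _.
  by apply: ge_bigmin_seq; rewrite // eq_sym.
have : 0 < `|x - y| by rewrite normr_gt0 subr_eq0.
lra.
Qed.

Lemma prod_XsubC_sign_change rs r d :
  uniq rs -> r \in rs -> 0 < d -> {in rs, forall y, y != r -> d < `|r - y|} ->
  (\prod_(z <- rs) ('X - z%:P)).[r - d] * (\prod_(z <- rs) ('X - z%:P)).[r + d] < 0.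
Proof.
move=> urs r_rs d_gt0 far.
rewrite !horner_prod -big_split /= (bigD1_seq r) //= !hornerXsubC.
have others_gt0 :
    0 < \prod_(y <- rs | y != r) (('X - y%:P).[r - d] * ('X - y%:P).[r + d]).
  rewrite big_seq_cond; apply: prodr_gt0 => y /andP[y_rs yr].
  by rewrite !hornerXsubC; have := far y y_rs yr; rewrite ltr_normr => /orP[]; nra.
by rewrite pmulr_llt0 //; nra.
Qed.

Lemma isolating_intervals_of_roots P rs : uniq rs -> size P = (size rs).+1 ->
  all (root P) rs -> exists d, isolating_intervals P rs d.
Proof.
move=> urs sizeP rootsP.
have [d d_gt0 sep] := exists_separation rs.
exists d; split=> // r r_rs.
have lc_gt0 : 0 < lead_coef P ^+ 2.
  by rewrite exprn_even_gt0 // lead_coef_eq0 -size_poly_eq0 sizeP.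
rewrite (all_roots_prod_XsubC sizeP rootsP) ?uniq_rootsE // !hornerZ.
rewrite mulrACA -expr2 pmulr_rlt0 //; apply: prod_XsubC_sign_change => // y y_rs yr.
by have := sep r y r_rs y_rs; rewrite eq_sym => /(_ yr); lra.
Qed.

Lemma isolating_intervalsZ P rs d c :
  0 < c -> isolating_intervals P rs d -> isolating_intervals (c *: P) rs d.
Proof.
move=> c_gt0 [urs sizeP d_gt0 sep sgn]; split=> // [|r r_rs].
  by rewrite size_scale ?gt_eqF.
by rewrite !hornerZ mulrACA pmulr_rlt0 ?mulr_gt0 ?sgn.
Qed.

Lemma isolating_intervals_neq0 P rs d :
  isolating_intervals P rs d -> {in interval_ends rs d, forall t, P.[t] != 0}.
Proof.
case=> _ _ _ _ sgn t; rewrite mem_cat => /orP[] /mapP[r r_rs ->];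
  by apply: contraTneq (sgn r r_rs) => ->; rewrite (mul0r, mulr0) ltxx.
Qed.

Lemma mul_lt0_perturb (a b e f : R) :
  a * b < 0 -> `|e| < `|a| -> `|f| < `|b| -> (a + e) * (b + f) < 0.
Proof.
rewrite !ltr_norml => ab_lt0 /andP[e_gt e_lt] /andP[f_gt f_lt].
have [a_lt0|a_ge0] := ltrP a 0; have [b_lt0|b_ge0] := ltrP b 0;
  rewrite ?(ltr0_norm a_lt0) ?(ger0_norm a_ge0) ?(ltr0_norm b_lt0)
    ?(ger0_norm b_ge0) in e_gt e_lt f_gt f_lt; nra.
Qed.

Lemma isolating_intervalsD P E rs d :
  isolating_intervals P rs d -> (size E < size P)%N ->
  {in interval_ends rs d, forall t, `|E.[t]| < `|P.[t]|} ->
  isolating_intervals (P + E) rs d.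
Proof.
move=> [urs sizeP d_gt0 sep sgn] sizeE small; split=> // [|r r_rs].
  by rewrite size_polyDl.
rewrite !hornerD; apply: mul_lt0_perturb; first exact: sgn.
  by apply: small; rewrite mem_cat (map_f (fun r => r - d)).
by apply: small; rewrite mem_cat (map_f (fun r => r + d)) ?orbT.
Qed.

Lemma rootfree_nonneg_multiple P : (forall x, ~~ root P x) ->
  P.[0] != 0 /\ forall x, 0 <= (P.[0] *: P).[x].
Proof.
move=> noroot; split; first exact: noroot.
have sgn_const := polyrcf.polyrN0_itv (i := `]-oo, +oo[%O) (fun y _ => noroot y).
by move=> x; rewrite hornerZ -sgr_ge0 sgrM (sgn_const 0 x) ?in_itv // -expr2 sqr_ge0.
Qed.

Lemma root_extension_or_nonneg_factor P rs :
  P != 0 -> uniq rs -> all (root P) rs -> ((size rs).+1 < size P)%N ->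
  (exists2 r, r \notin rs & root P r) \/
  exists T W, [/\ P = T * W, W != 0, (size W < size P)%N & forall x, 0 <= T.[x]].
Proof.
move=> P0 urs rootsP size_rs.
have [S P_eq] := uniq_roots_prod_XsubC rootsP (etrans (uniq_rootsE rs) urs).
set A := \prod_(z <- rs) ('X - z%:P) in P_eq.
have A0 : A != 0 by rewrite -size_poly_eq0 size_prod_XsubC.
have [[r rootSr]|noroot] := pselect (exists r, root S r); last first.
  have [S00 T_ge0] : S.[0] != 0 /\ forall x, 0 <= (S.[0] *: S).[x].
    by apply: rootfree_nonneg_multiple => x; apply/negP => rootS; apply: noroot; exists x.
  right; exists (S.[0] *: S), (S.[0]^-1 *: A); split => //.
  - by rewrite P_eq -scalerAl -scalerAr scalerA mulfV ?scale1r.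
  - by rewrite scaler_eq0 invr_eq0 negb_or S00.
  - by rewrite size_scale ?invr_eq0 // size_prod_XsubC.
have [r_rs|r_rs] := boolP (r \in rs); last first.
  by left; exists r; rewrite // P_eq rootM rootSr.
right; have /factor_theorem[S1 S_eq] := rootSr.
have /factor_theorem[A1 A_eq] : root A r by rewrite root_prod_XsubC.
have W0 : S1 * A1 != 0.
  by apply: contraNneq P0; rewrite P_eq S_eq A_eq mulrACA => ->; rewrite mul0r.
have P_eq2 : P = ('X - r%:P) ^+ 2 * (S1 * A1).
  by rewrite P_eq S_eq A_eq mulrACA -expr2 mulrC.
exists (('X - r%:P) ^+ 2), (S1 * A1); split => //.
- rewrite P_eq2 (size_mul _ W0) ?expf_neq0 ?polyXsubC_eq0 // size_exp_XsubC.
  by rewrite !addSn add0n /= ltnS leqnSn.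
- by move=> x; rewrite horner_exp hornerXsubC sqr_ge0.
Qed.

Lemma uniq_roots_of_no_nonneg_factor P : P != 0 ->
  (forall T W, P = T * W -> W != 0 -> (size W < size P)%N -> ~ forall x, 0 <= T.[x]) ->
  exists rs, [/\ uniq rs, size P = (size rs).+1 & all (root P) rs].
Proof.
move=> P0 no_factor.
suff /(_ (size P).-1 (leqnn _)) [rs [urs size_rs rootsP]] :
    forall k, (k <= (size P).-1)%N -> exists rs, [/\ uniq rs, size rs = k & all (root P) rs].
  by exists rs; rewrite size_rs prednK // size_poly_gt0.
elim=> [|k IHk] k_le; first by exists [::].
have [rs [urs size_rs rootsP]] := IHk (ltnW k_le).
have [|[r r_rs rootPr]|[T [W [P_eq W0 sizeW T_ge0]]]] :=
  root_extension_or_nonneg_factor P0 urs rootsP _.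
- by rewrite size_rs -ltn_predRL.
- by exists (r :: rs); rewrite /= r_rs urs size_rs rootPr rootsP.
- by case: (no_factor T W P_eq W0 sizeW T_ge0).
Qed.

Lemma infinite_set_nonroot (A : set R) P :
  infinite_set A -> P != 0 -> exists2 x, A x & ~~ root P x.
Proof.
move=> infA P0; have [B BA sizeB] := infinite_set_fset (size P) infA.
have [/allPn[x xB nroot]|rootsB] := boolP (~~ all (root P) (enum_fset B)).
  by exists x => //; apply: BA.
by have := max_poly_roots P0 (negbNE rootsB) (fset_uniq B); rewrite ltnNge sizeB.
Qed.

End RealPolynomials.

Section OrthogonalPolynomials.
Variables (R : realType) (mu : {measure set R -> \bar R}).
Hypothesis moments : finite_moments mu.
Implicit Types (p q S T W : {poly R}).

Definition poly_integral p := (\int[mu]_x (p.[x])%:E)%E.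

Lemma integrable_horner p : mu.-integrable setT (fun x => (p.[x])%:E).
Proof.
have -> : (fun x => (p.[x])%:E) = (fun x => (\sum_(i < size p) (p`_i)%:E * (x ^+ i)%:E)%E).
  by apply/funext => x; rewrite horner_coef -sumEFin; apply: eq_bigr => i _; rewrite EFinM.
by apply: integrable_sum => // i _; apply: integrableZl.
Qed.

Lemma poly_integralD p q : poly_integral (p + q) = (poly_integral p + poly_integral q)%E.
Proof.
rewrite /poly_integral -integralD ?integrable_horner //.
by apply: eq_integral => x _; rewrite hornerD EFinD.
Qed.

Lemma poly_integralZ c p : poly_integral (c *: p) = (c%:E * poly_integral p)%E.
Proof.
rewrite /poly_integral -integralZl ?integrable_horner //.
by apply: eq_integral => x _; rewrite hornerZ EFinM.
Qed.

Lemma integral_hornerM p q :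
  (\int[mu]_x (p.[x] * q.[x])%:E)%E = poly_integral (p * q).
Proof. by apply: eq_integral => x _; rewrite hornerM. Qed.

Hypothesis infinite_support : infinite_set (msupport mu).

Lemma poly_integral_gt0 p : p != 0 -> (forall x, 0 <= p.[x]) -> (0 < poly_integral p)%E.
Proof.
move=> p0 p_ge0.
have [x0 supp_x0 px0] := infinite_set_nonroot infinite_support p0.
have px0_gt0 : 0 < p.[x0] by rewrite lt_def px0 p_ge0.
have [e /= e_gt0 near_x0] : exists2 e : R, 0 < e & forall y, ball x0 e y -> p.[x0] / 2 < p.[y].
  apply/nbhs_ballP; apply: (cvgr_gt _ (@continuous_horner _ p x0)); lra.
set A := [set y : R | (x0 - e < y) && (y < x0 + e)].
have mA : measurable A.
  rewrite (_ : A = `]x0 - e, x0 + e[%classic); first exact: measurable_itv.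
  by apply/seteqP; split => y; rewrite /A /= in_itv.
have c_gt0 : 0 < p.[x0] / 2 by lra.
apply: (@lt_le_trans _ _ (\int[mu]_x (p.[x0] / 2 * \1_A x)%:E)%E).
  rewrite (@integralZl_indic _ _ _ _ _ measurableT (fun=> A)) //; last first.
    by move=> /ltW; rewrite leNgt c_gt0.
  by rewrite integral_indic // setIT mule_gt0 //; apply: supp_x0.
apply: ge0_le_integral => //.
- by move=> x _; rewrite lee_fin mulr_ge0 // ltW.
- by apply/measurable_EFinP; apply: measurable_funM.
- exact: measurable_int (integrable_horner p).
- move=> x _; rewrite lee_fin indicE; have [xA|] := boolP (x \in A); last by rewrite mulr0.
  rewrite mulr1 ltW // near_x0 //; move: xA; rewrite /A in_setE /= => /andP[? ?].
  by rewrite /ball /= ltr_norml; apply/andP; split; lra.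
Qed.

Variable ph : nat -> {poly R}.
Hypothesis ops : monic_OPS mu ph.

Lemma ops_neq0 n : ph n != 0.
Proof. by have [_ [ph_size _]] := ops; rewrite -size_poly_eq0 ph_size. Qed.

Lemma ops_orthogonal_low N S : (size S <= N)%N -> poly_integral (ph N * S) = 0%E.
Proof.
have [ph_monic [ph_size ph_orth]] := ops.
move=> le_SN; have [k le_Sk le_kN] : exists2 k, (size S <= k)%N & (k <= N)%N.
  by exists (size S).
elim: k S le_Sk le_kN {le_SN} => [|k IHk] S le_Sk le_kN.
  move: le_Sk; rewrite leqn0 size_poly_eq0 => /eqP ->; rewrite mulr0.
  by rewrite /poly_integral (eq_integral (cst 0%E)) ?integral0 // => x _; rewrite horner0.
pose S' := S - S`_k *: ph k.
have le_S'k : (size S' <= k)%N.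
  have lead_k : (ph k)`_k = 1.
    by have := ph_monic k; rewrite monicE lead_coefE ph_size => /eqP.
  apply/leq_sizeP => j; rewrite coefB coefZ leq_eqVlt => /orP[/eqP <-|lt_kj].
    by rewrite lead_k mulr1 subrr.
  have S_j : S`_j = 0 by rewrite nth_default // (leq_trans le_Sk).
  have ph_j : (ph k)`_j = 0 by rewrite nth_default ?ph_size.
  by rewrite S_j ph_j mulr0 subrr.
have -> : S = S' + S`_k *: ph k by rewrite subrK.
rewrite mulrDr poly_integralD -scalerAr poly_integralZ IHk ?(ltnW le_kN) //.
by rewrite -integral_hornerM ph_orth ?mule0 ?adde0 // => eq_Nk; move: le_kN; rewrite eq_Nk ltnn.
Qed.

Lemma ops_no_nonneg_factor n T W : ph n = T * W -> W != 0 ->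
  (size W < size (ph n))%N -> ~ forall x, 0 <= T.[x].
Proof.
have [_ [ph_size _]] := ops.
move=> ph_eq W0; rewrite ph_size ltnS => sizeW T_ge0.
have phW_ge0 : forall x, 0 <= (ph n * W).[x].
  by move=> x; rewrite ph_eq !hornerM -mulrA mulr_ge0 // -expr2 sqr_ge0.
have := poly_integral_gt0 (mulf_neq0 (ops_neq0 n) W0) phW_ge0.
by rewrite ops_orthogonal_low // ltxx.
Qed.

Lemma ops_isolating_intervals n :
  exists rd : seq R * R, isolating_intervals (ph n) rd.1 rd.2.
Proof.
have [rs [urs size_rs rootsP]] :=
  uniq_roots_of_no_nonneg_factor (ops_neq0 n) (@ops_no_nonneg_factor n).
by have [d iso] := isolating_intervals_of_roots urs size_rs rootsP; exists (rs, d).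
Qed.

End OrthogonalPolynomials.

Section DominatingWeights.
Variables (R : realType) (P : nat -> {poly R}) (T : nat -> seq R).

Definition ratio_bound n : R :=
  \big[Num.max/0]_(t <- T n) \big[Num.max/0]_(m < n) (`|(P m).[t]| / `|(P n).[t]|).

Definition dominating_weight n : R :=
  \prod_(i < n.+1) (i.+1%:R * (1 + ratio_bound i)).

Lemma ratio_bound_ge0 n : 0 <= ratio_bound n.
Proof. exact: bigmax_ge_id. Qed.

Lemma dominating_weight_gt0 n : 0 < dominating_weight n.
Proof.
apply: prodr_gt0 => i _; apply: mulr_gt0; first by rewrite ltr0n.
by rewrite ltr_pwDl ?ratio_bound_ge0.
Qed.

Lemma dominating_weightS n :
  dominating_weight n.+1 = dominating_weight n * (n.+2%:R * (1 + ratio_bound n.+1)).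
Proof. by rewrite /dominating_weight big_ord_recr. Qed.

Lemma dominating_weight_le m n : (m <= n)%N -> dominating_weight m <= dominating_weight n.
Proof.
elim: n => [|n IHn]; first by rewrite leqn0 => /eqP ->.
rewrite leq_eqVlt ltnS => /orP[/eqP -> //|/IHn le_mn].
rewrite dominating_weightS (le_trans le_mn) //.
apply: ler_peMr; first exact/ltW/dominating_weight_gt0.
have : (1 : R) <= n.+2%:R by rewrite ler1n.
by have := ratio_bound_ge0 n.+1; nra.
Qed.

Hypothesis P_neq0 : forall n, {in T n, forall t, (P n).[t] != 0}.

Lemma ratio_boundP m n t : (m < n)%N -> t \in T n ->
  `|(P m).[t]| <= ratio_bound n * `|(P n).[t]|.
Proof.
move=> lt_mn t_T; rewrite -ler_pdivrMr ?normr_gt0 ?P_neq0 //.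
apply: bigmax_sup_seq t_T isT _.
exact: le_bigmax (fun m : 'I_n => `|(P m).[t]| / `|(P n).[t]|) (Ordinal lt_mn).
Qed.

Lemma dominating_weightP m n t : (m < n)%N -> t \in T n ->
  n.+1%:R * (dominating_weight m * `|(P m).[t]|) <= dominating_weight n * `|(P n).[t]|.
Proof.
case: n => // n lt_mn t_T; rewrite dominating_weightS.
have step : dominating_weight m * `|(P m).[t]| <=
    dominating_weight n * (ratio_bound n.+1 * `|(P n.+1).[t]|).
  apply: ler_pM => //; first exact/ltW/dominating_weight_gt0.
    exact: dominating_weight_le.
  exact: ratio_boundP.
apply: le_trans (ler_wpM2l (ler0n _ _) step) _.
have := ratio_bound_ge0 n.+1; have : (0 : R) <= n.+2%:R by [].
have : 0 <= dominating_weight n * `|(P n.+1).[t]|.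
  by rewrite mulr_ge0 // ltW // dominating_weight_gt0.
nra.
Qed.

End DominatingWeights.

Lemma weighted_tail_lt_head (R : realType) (P : nat -> {poly R}) (rho gamma : nat -> R) K n t :
  (K <= n)%N -> \sum_(j < K) `|gamma j.+1| < n.+1%:R ->
  (forall m, 0 < rho m) -> (P n).[t] != 0 ->
  (forall m, (m < n)%N -> n.+1%:R * (rho m * `|(P m).[t]|) <= rho n * `|(P n).[t]|) ->
  `|(\sum_(j < K) gamma j.+1 *: (rho (n - j.+1)%N *: P (n - j.+1)%N)).[t]| <
  `|(rho n *: P n).[t]|.
Proof.
move=> le_Kn small_gamma rho_gt0 Pnt dom.
have n1_gt0 : (0 : R) < n.+1%:R by rewrite ltr0n.
rewrite hornerZ normrM (gtr0_norm (rho_gt0 n)) horner_sum.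
set X := rho n * `|(P n).[t]|.
have X_gt0 : 0 < X by rewrite mulr_gt0 ?normr_gt0.
apply: le_lt_trans (ler_norm_sum _ _ _) _.
apply: (@le_lt_trans _ _ (\sum_(j < K) `|gamma j.+1| * (X / n.+1%:R))).
  apply: ler_sum => j _; rewrite !hornerZ !normrM (gtr0_norm (rho_gt0 _)).
  by rewrite ler_wpM2l // ler_pdivlMr // mulrC dom //; have := ltn_ord j; lia.
by rewrite -mulr_suml mulrA ltr_pdivrMr // mulrC ltr_pM2l.
Qed.

Lemma size_weighted_tail (R : realType) (P : nat -> {poly R}) (rho gamma : nat -> R) K n :
  (forall m, size (P m) = m.+1) -> (K <= n)%N ->
  (size (\sum_(j < K) gamma j.+1 *: (rho (n - j.+1)%N *: P (n - j.+1)%N))%R <= n)%N.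
Proof.
move=> P_size le_Kn; apply: leq_trans (size_sum _ _ _) _; apply/bigmax_leqP => j _.
rewrite (leq_trans (size_scale_leq _ _)) // (leq_trans (size_scale_leq _ _)) //.
by rewrite P_size; have := ltn_ord j; lia.
Qed.

Theorem mainTheorem3 (R : realType) (mu : {measure set R -> \bar R})
  (ph : nat -> {poly R}) :
  finite_moments mu -> infinite_set (msupport mu) -> monic_OPS mu ph ->
  exists rho : nat -> R, (forall n, 0 < rho n) /\
    forall (K : nat) (gamma : nat -> R), (0 < K)%N -> gamma 0%N = 1 ->
      gamma K != 0 ->
      exists N : nat, (K <= N)%N /\ forall n : nat, (N <= n)%N ->
        only_real_zeros (\sum_(j < K.+1) gamma j *: (rho (n - j)%N *: ph (n - j)%N)).
Proof.
move=> moments infinite_support ops; have [_ [ph_size _]] := ops.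
have /choice[D isoD] := ops_isolating_intervals moments infinite_support ops.
pose T n := interval_ends (D n).1 (D n).2.
have T_neq0 n : {in T n, forall t, (ph n).[t] != 0} := isolating_intervals_neq0 (isoD n).
exists (dominating_weight ph T); split=> [n|K gamma _ gamma0 _].
  exact: dominating_weight_gt0.
pose G := \sum_(j < K) `|gamma j.+1|.
exists (maxn K (Num.Def.archi_bound G)); split=> [|n]; first exact: leq_maxl.
rewrite geq_max => /andP[le_Kn le_Gn].
have lt_Gn : G < n.+1%:R.
  apply: lt_le_trans (archi_boundP (sumr_ge0 _ _)) _ => [j _ //|].
  by rewrite ler_nat (leq_trans le_Gn).
rewrite big_ord_recl gamma0 subn0 scale1r.
under eq_bigr do rewrite lift0.
apply: (isolating_intervals_only_real_zeros (rs := (D n).1) (d := (D n).2)).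
apply: isolating_intervalsD.
- exact/isolating_intervalsZ/isoD/dominating_weight_gt0.
- rewrite size_scale ?gt_eqF ?dominating_weight_gt0 // ph_size ltnS.
  exact: size_weighted_tail.
- move=> t t_T; apply: weighted_tail_lt_head => //; first exact: dominating_weight_gt0.
    exact: T_neq0.
  by move=> m lt_mn; apply: dominating_weightP.
Qed.
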